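(* Let $S$ be a distributive $\{\vee,0\}$-semilattice. Then the set of all elements $\varepsilon\in S$ such that $S$ satisfies $\mathrm{URP}_1$ at $\varepsilon$ is closed under the join operation.
   Context: A join-semilattice $S$ is distributive if whenever $c\leq a\vee b$ in $S$ there exist $a'\leq a$, $b'\leq b$ with $c=a'\vee b'$. Let $S$ be a $\{\vee,0\}$-semilattice and $\varepsilon\in S$. $S$ satisfies $\mathrm{URP}_1$ at $\varepsilon$ if for every family $((\alpha_i,\beta_i))_{i\in I}$ of elements of $S\times S$ with $\alpha_i\vee\beta_i=\varepsilon$ for all $i$, there exist a family $((\alpha_i^*,\beta_i^* ))_{i\in I}$ in $S\times S$ and a family $(\gamma_{i,j})_{(i,j)\in I\times I}$ in $S$ such that for all $i,j,k\in I$: (i) $\alpha_i^*\leq\alpha_i$, $\beta_i^*\leq\beta_i$, $\alpha_i^*\vee\beta_i^*=\varepsilon$; (ii) $\gamma_{i,j}\leq\alpha_i^*$ and $\gamma_{i,j}\leq\beta_j^*$; (iii) $\alpha_i^*\leq\alpha_j^*\vee\gamma_{i,j}$ and $\beta_j^*\leq\beta_i^*\vee\gamma_{i,j}$; (iv) $\gamma_{i,k}\leq\gamma_{i,j}\vee\gamma_{j,k}$. *)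

From HB Require Import structures.
From mathcomp Require Import all_boot all_order.
Set Implicit Arguments. Unset Strict Implicit. Unset Printing Implicit Defensive.
Import Order.LTheory.
Local Open Scope order_scope.

(* A {join,0}-semilattice is a [bJoinSemilatticeType d]; 0 is \bot. *)

Definition distributive_sl (d : Order.disp_t) (S : bJoinSemilatticeType d) : Prop :=
  forall a b c : S, c <= a `|` b ->
    exists a' b' : S, [/\ a' <= a, b' <= b & c = a' `|` b'].

Definition URP1 (d : Order.disp_t) (S : bJoinSemilatticeType d) (eps : S) : Prop :=
  forall (I : Type) (alpha beta : I -> S),
    (forall i, alpha i `|` beta i = eps) ->
    exists (alpha' beta' : I -> S) (gamma : I -> I -> S),
      forall i j k : I,
        [/\ (alpha' i <= alpha i /\ beta' i <= beta i /\ alpha' i `|` beta' i = eps),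
            (gamma i j <= alpha' i /\ gamma i j <= beta' j),
            (alpha' i <= alpha' j `|` gamma i j /\ beta' j <= beta' i `|` gamma i j)
          & gamma i k <= gamma i j `|` gamma j k].

(* Split alpha i \/ beta i = e1 \/ e2 along e1 and e2 using distributivity,
   apply URP1 at e1 and at e2 to the two resulting families, and join the two
   refinements pointwise: every condition of URP1 is preserved by joins. *)
From HB Require Import structures.
From mathcomp Require Import all_boot all_order.
From Stdlib Require Import ClassicalEpsilon.
Set Implicit Arguments. Unset Strict Implicit.
Local Open Scope order_scope.
Import Order.LTheory.

Section Urp1Refinement.

Variables (d : Order.disp_t) (S : bJoinSemilatticeType d) (I : Type).

(* Conditions (i)-(iv) of URP1, so that [URP1 eps] unfolds to
   [forall I alpha beta, ... -> exists alpha' beta' gamma, urp1_refinement ...]. *)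
Definition urp1_refinement (eps : S) (alpha beta alpha' beta' : I -> S)
    (gamma : I -> I -> S) : Prop :=
  forall i j k : I,
    [/\ (alpha' i <= alpha i /\ beta' i <= beta i /\ alpha' i `|` beta' i = eps),
        (gamma i j <= alpha' i /\ gamma i j <= beta' j),
        (alpha' i <= alpha' j `|` gamma i j /\ beta' j <= beta' i `|` gamma i j)
      & gamma i k <= gamma i j `|` gamma j k].

Lemma distributive_split_family (c alpha beta : I -> S) :
  distributive_sl S -> (forall i, c i <= alpha i `|` beta i) ->
  exists a b : I -> S,
    forall i, [/\ a i <= alpha i, b i <= beta i & a i `|` b i = c i].
Proof.
move=> distrS le_c.
have split_at i : {p : S * S | [/\ p.1 <= alpha i, p.2 <= beta i & p.1 `|` p.2 = c i]}.
  apply: constructive_indefinite_description.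
  have [a' [b' [? ? ->]]] := distrS _ _ _ (le_c i).
  by exists (a', b').
exists (fun i => (sval (split_at i)).1), (fun i => (sval (split_at i)).2) => i.
exact: svalP (split_at i).
Qed.

Lemma urp1_refinement_widen eps (a b alpha beta alpha' beta' : I -> S) gamma :
  urp1_refinement eps a b alpha' beta' gamma ->
  (forall i, a i <= alpha i) -> (forall i, b i <= beta i) ->
  urp1_refinement eps alpha beta alpha' beta' gamma.
Proof.
move=> R le_a le_b i j k; have [[la [lb ?]] ? ? ?] := R i j k.
by split=> //; split; [exact: le_trans la (le_a i) | split=> //; exact: le_trans lb (le_b i)].
Qed.

Lemma urp1_refinement_join e1 e2 (a1 b1 a1' b1' a2 b2 a2' b2' : I -> S) g1 g2 :
  urp1_refinement e1 a1 b1 a1' b1' g1 ->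
  urp1_refinement e2 a2 b2 a2' b2' g2 ->
  urp1_refinement (e1 `|` e2)
    (fun i => a1 i `|` a2 i) (fun i => b1 i `|` b2 i)
    (fun i => a1' i `|` a2' i) (fun i => b1' i `|` b2' i)
    (fun i j => g1 i j `|` g2 i j).
Proof.
move=> R1 R2 i j k.
have [[? [? E1]] [? ?] [? ?] ?] := R1 i j k.
have [[? [? E2]] [? ?] [? ?] ?] := R2 i j k.
split.
- by split; [exact: leU2 | split; [exact: leU2 | rewrite joinACA E1 E2]].
- by split; exact: leU2.
- by split; rewrite -joinACA; exact: leU2.
- by rewrite joinACA; exact: leU2.
Qed.

End Urp1Refinement.

Theorem proposition1p4 (d : Order.disp_t) (S : bJoinSemilatticeType d) :
  distributive_sl S ->
  forall e1 e2 : S, URP1 e1 -> URP1 e2 -> URP1 (e1 `|` e2).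
Proof.
move=> distrS e1 e2 U1 U2 I alpha beta join_eq.
have le_e1 i : e1 <= alpha i `|` beta i by rewrite join_eq leUl.
have le_e2 i : e2 <= alpha i `|` beta i by rewrite join_eq leUr.
have [a1 [b1 split1]] := distributive_split_family distrS le_e1.
have [a2 [b2 split2]] := distributive_split_family distrS le_e2.
have [a1' [b1' [g1 R1]]] := U1 I a1 b1 (fun i => ltac:(by case: (split1 i))).
have [a2' [b2' [g2 R2]]] := U2 I a2 b2 (fun i => ltac:(by case: (split2 i))).
have le_alpha i : a1 i `|` a2 i <= alpha i.
  by have [? _ _] := split1 i; have [? _ _] := split2 i; rewrite leUx; apply/andP.
have le_beta i : b1 i `|` b2 i <= beta i.
  by have [_ ? _] := split1 i; have [_ ? _] := split2 i; rewrite leUx; apply/andP.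
exists (fun i => a1' i `|` a2' i), (fun i => b1' i `|` b2' i),
  (fun i j => g1 i j `|` g2 i j).
exact: urp1_refinement_widen (urp1_refinement_join R1 R2) le_alpha le_beta.
Qed.
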